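(* Let $\Gamma$ be an Arf numerical semigroup with conductor $c$ and multiplicity $e$. Let $e'\in\Gamma\setminus\{0\}$, let $\Gamma_{e'}=\{0\}\cup(e'+\Gamma)$, and let $c'=c+e'$ (the conductor of $\Gamma_{e'}$). Then for every $k\in\mathbb N$, \[ \delta^2_{\Gamma_{e'}}(c'+e'+k)=\begin{cases}\delta^2_\Gamma(c+k)+2 & \text{if } e'=e \text{ and } \delta^1_\Gamma(c+e+k)=\delta^2_\Gamma(c+k),\\ \delta^2_\Gamma(c+k)+3 & \text{otherwise.}\end{cases} \]
   Context: A numerical semigroup is a subset $\Gamma\subseteq\mathbb N$ containing $0$, closed under addition, with finite complement in $\mathbb N$; its elements are $0=\rho_1<\rho_2<\cdots$, its multiplicity is $\rho_2$ and its conductor is the least $c$ with $c+\mathbb N\subseteq\Gamma$. $\Gamma$ is Arf if $\rho_i+\rho_j-\rho_k\in\Gamma$ whenever $i\ge j\ge k$. For $x\in\mathbb Z$, $D_\Gamma(x)=\{s\in\Gamma: x-s\in\Gamma\}$ and $D_\Gamma(x_1,\dots,x_k)=\bigcup_i D_\Gamma(x_i)$. For an integer $m$: $\delta^1_\Gamma(m)=\min\{|D_\Gamma(m_1)|: m\le m_1\in\Gamma\}$ and $\delta^2_\Gamma(m)=\min\{|D_\Gamma(m_1,m_2)|: m\le m_1<m_2,\ m_1,m_2\in\Gamma\}$ (first and second Feng-Rao distances). *)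

From mathcomp Require Import all_boot.
From Stdlib Require Import ClassicalEpsilon.

Set Implicit Arguments.
Unset Strict Implicit.
Unset Printing Implicit Defensive.

Definition numerical_semigroup (G : pred nat) : Prop :=
  [/\ G 0,
      (forall x y, G x -> G y -> G (x + y)) &
      exists N, forall n, N <= n -> G n].

Definition Arf (G : pred nat) : Prop :=
  forall x y z, G x -> G y -> G z -> y <= x -> z <= y -> G (x + y - z).

Definition is_multiplicity (G : pred nat) (e : nat) : Prop :=
  [/\ G e, 0 < e & forall x, G x -> 0 < x -> e <= x].

Definition is_conductor (G : pred nat) (c : nat) : Prop :=
  (forall n, c <= n -> G n) /\
  (forall c', (forall n, c' <= n -> G n) -> c <= c').

Definition shift_sg (G : pred nat) (e' : nat) : pred nat :=
  fun x => (x == 0) || ((e' <= x) && G (x - e')).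

(* s \in D_G(x): s in G and x - s in G (for natural x, this forces s <= x). *)
Definition inD (G : pred nat) (x s : nat) : bool :=
  [&& s <= x, G s & G (x - s)].

Definition cardD1 (G : pred nat) (x : nat) : nat :=
  count (inD G x) (iota 0 x.+1).

Definition cardD2 (G : pred nat) (x1 x2 : nat) : nat :=
  count (fun s => inD G x1 s || inD G x2 s) (iota 0 (maxn x1 x2).+1).

(* The minimum of a set of naturals (well defined whenever it is nonempty,
   chosen by Hilbert's epsilon). *)
Definition nat_min (P : nat -> Prop) : nat :=
  epsilon (inhabits 0) (fun d => P d /\ forall d', P d' -> d <= d').

Definition delta1 (G : pred nat) (m : nat) : nat :=
  nat_min (fun d => exists m1, [/\ m <= m1, G m1 & d = cardD1 G m1]).

Definition delta2 (G : pred nat) (m : nat) : nat :=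
  nat_min (fun d => exists m1 m2,
    [/\ m <= m1, m1 < m2, G m1, G m2 & d = cardD2 G m1 m2]).

From mathcomp Require Import all_boot zify.
From Stdlib Require Import ClassicalEpsilon Wf_nat.

(* Above its conductor, the shifted semigroup [G'] = {0} U (e' + G) has divisor sets
   D'(n + 2e') = {0, n + 2e'} U (e' + D(n)).  Hence for n1 < n2
   |D'(n1 + 2e', n2 + 2e')| = |D(n1, n2)| + 3 - [n1 + e' \in D(n2)],
   and the overlap n1 + e' \in D(n2) forces n2 - n1 \in e' + G.  So the second
   Feng-Rao distance grows by 3, unless some pair realising delta2 G (c + k) has
   such an overlap.  When G is Arf, |D(n + e)| < |D(n + d)| for every d \in G with
   d > e, while D(n1) is contained in D(n2) when n2 - n1 \in G; so a minimising pair
   with n2 - n1 \in G has n2 - n1 = e, which forces e' = e and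
   delta1 G (c + e + k) = delta2 G (c + k).  Conversely, in that case the pair
   (q - e, q), with q realising delta1 G (c + e + k), gives the value
   delta2 G (c + k) + 2. *)

Set Implicit Arguments.
Unset Strict Implicit.
Unset Printing Implicit Defensive.

Lemma nat_min_spec (P : nat -> Prop) : (exists d, P d) ->
  P (nat_min P) /\ forall d, P d -> nat_min P <= d.
Proof.
move=> exP; apply: (epsilon_spec (inhabits 0) (fun d => P d /\ forall d', P d' -> d <= d')).
have [d [[Pd minPd] _]] := dec_inh_nat_subset_has_unique_least_element P
  (fun n => classic (P n)) exP.
by exists d; split=> // d' /minPd /leP.
Qed.

Lemma nat_min_le (P : nat -> Prop) d : P d -> nat_min P <= d.
Proof. by move=> Pd; apply: (nat_min_spec (ex_intro _ d Pd)).2. Qed.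

Lemma nat_min_mem (P : nat -> Prop) : (exists d, P d) -> P (nat_min P).
Proof. by move=> /nat_min_spec[]. Qed.

Section CountIota.

Variable P : pred nat.

Lemma count_iota_predD1 N x : x < N ->
  count P (iota 0 N) = count [predD1 P & x] (iota 0 N) + P x.
Proof.
move=> ltxN.
have x_iota : x \in iota 0 N by rewrite mem_iota.
have -> : (P x : nat) = count P [:: x] by rewrite /= addn0.
rewrite -(filter_pred1_uniq (iota_uniq 0 N) x_iota) count_filter.
rewrite -count_predUI (@eq_count _ (predI _ _) pred0) ?count_pred0 ?addn0.
  by apply: eq_count => s /=; case: eqVneq => [->|]; rewrite ?andbT ?andbF ?orbF.
by move=> s /=; case: eqVneq; rewrite ?andbF.
Qed.

Lemma count_iota_trim M N : M <= N -> {in P, forall s, s < M} ->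
  count P (iota 0 N) = count P (iota 0 M).
Proof.
move=> leMN ltPM; rewrite -(subnKC leMN) iotaD count_cat add0n.
rewrite (@eq_in_count _ _ pred0 (iota M _)) ?count_pred0 ?addn0 // => s.
rewrite mem_iota /= => /andP[leMs _]; apply: contraTF leMs => Ps.
by rewrite -ltnNge ltPM.
Qed.

Lemma count_iota_shift N d :
  count (fun s => (d <= s) && P (s - d)) (iota 0 (d + N)) = count P (iota 0 N).
Proof.
rewrite iotaD count_cat (@eq_in_count _ _ pred0 (iota 0 d)) ?count_pred0; last first.
  by move=> s; rewrite mem_iota => /andP[_ ltsd]; rewrite leqNgt ltsd.
rewrite add0n -[in iota d N](addn0 d) iotaDl count_map.
by apply: eq_count => s /=; rewrite leq_addr addKn.
Qed.

End CountIota.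

Lemma count_mem_iota (s : seq nat) N : uniq s -> {subset s <= gtn N} ->
  count (mem s) (iota 0 N) = size s.
Proof.
move=> uniq_s lt_s; rewrite -size_filter; apply/perm_size/uniq_perm => //.
  exact/filter_uniq/iota_uniq.
by move=> x; rewrite mem_filter mem_iota /= andb_idr // => /lt_s.
Qed.

Section FengRaoDistances.

Variable G : pred nat.

Lemma delta1_le m m1 : m <= m1 -> G m1 -> delta1 G m <= cardD1 G m1.
Proof. by move=> lem Gm1; rewrite /delta1; apply: nat_min_le; exists m1. Qed.

Lemma delta2_le m m1 m2 : m <= m1 -> m1 < m2 -> G m1 -> G m2 ->
  delta2 G m <= cardD2 G m1 m2.
Proof. by move=> le1 lt12 G1 G2; rewrite /delta2; apply: nat_min_le; exists m1, m2. Qed.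

Variable c : nat.
Hypothesis Gc : forall n, c <= n -> G n.

Lemma delta1_attained m :
  exists m1, [/\ m <= m1, G m1 & delta1 G m = cardD1 G m1].
Proof.
apply: (@nat_min_mem (fun d =>
  exists m1, [/\ m <= m1, G m1 & d = cardD1 G m1])).
exists (cardD1 G (maxn m c)), (maxn m c).
by rewrite leq_maxl Gc ?leq_maxr.
Qed.

Lemma delta2_attained m :
  exists m1 m2, [/\ m <= m1, m1 < m2, G m1, G m2 & delta2 G m = cardD2 G m1 m2].
Proof.
apply: (@nat_min_mem (fun d =>
  exists m1 m2, [/\ m <= m1, m1 < m2, G m1, G m2 & d = cardD2 G m1 m2])).
set n := maxn m c; exists (cardD2 G n n.+1), n, n.+1.
by rewrite leq_maxl ltnSn !Gc // ?leq_maxr // ltnW // ltnS leq_maxr.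
Qed.

End FengRaoDistances.

Section DivisorSets.

Variable G : pred nat.

Lemma inD_gt x s : x < s -> inD G x s = false.
Proof. by rewrite /inD ltnNge => /negbTE ->. Qed.

Lemma inD_self x : G 0 -> G x -> inD G x x.
Proof. by move=> G0 Gx; rewrite /inD leqnn subnn G0 Gx. Qed.

Lemma cardD1E x N : x < N -> cardD1 G x = count (inD G x) (iota 0 N).
Proof.
move=> ltxN; rewrite [RHS](count_iota_trim ltxN) // => s /andP[lesx _].
exact: leq_ltn_trans lesx (ltnSn x).
Qed.

Hypothesis Gadd : forall x y, G x -> G y -> G (x + y).

Lemma inD_mono x y s : x <= y -> G (y - x) -> inD G x s -> inD G y s.
Proof.
move=> lexy Gyx /and3P[lesx Gs Gxs]; rewrite /inD (leq_trans lesx lexy) Gs /=.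
by rewrite (_ : y - s = (x - s) + (y - x)) ?Gadd //; lia.
Qed.

Lemma cardD2_eq_cardD1 x y : x <= y -> G (y - x) -> cardD2 G x y = cardD1 G y.
Proof.
move=> lexy Gyx; rewrite /cardD2 /cardD1 (maxn_idPr lexy).
by apply: eq_count => s; case: (boolP (inD G x s)) => // /(inD_mono lexy Gyx) ->.
Qed.

End DivisorSets.

Section ArfSemigroup.

Variables (G : pred nat) (c e : nat).
Hypotheses (G0 : G 0) (Gadd : forall x y, G x -> G y -> G (x + y)).
Hypotheses (G_Arf : Arf G) (Gc : forall n, c <= n -> G n).
Hypothesis e_mult : is_multiplicity G e.

Lemma inD_addn_multiplicity x s : inD G x s -> s < x -> s + e <= x.
Proof.
case: e_mult => _ _ e_min /and3P[_ _ Gxs] ltsx.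
have : e <= x - s by apply: e_min; rewrite // subn_gt0.
lia.
Qed.

Lemma Arf_inD_lift n d s : G d -> e <= d -> s <= n -> inD G (n + e) s -> inD G (n + d) s.
Proof.
case: e_mult => Ge _ _ Gd led lesn /and3P[_ Gs Gnes].
have e_le : e <= n + e - s by lia.
rewrite /inD Gs (leq_trans lesn (leq_addr _ _)) /=.
have -> : n + d - s = (n + e - s) + d - e by lia.
have [le_d|/ltnW le_d] := leqP (n + e - s) d.
  by rewrite addnC; apply: G_Arf.
exact: G_Arf.
Qed.

(* D(n + e) minus n + e embeds in D(n + d) minus both n + d and n + d - e. *)
Lemma Arf_cardD1_lt n d : c <= n -> G d -> e < d ->
  cardD1 G (n + e) < cardD1 G (n + d).
Proof.
case: e_mult => Ge e_gt0 _ lecn Gd lted.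
have Gc_ge x : n <= x -> G x by move=> lenx; apply: Gc; apply: leq_trans lecn lenx.
have De_self : inD G (n + e) (n + e) by apply: inD_self; rewrite // Gc_ge // leq_addr.
have Dd_self : inD G (n + d) (n + d) by apply: inD_self; rewrite // Gc_ge // leq_addr.
have Dd_co_e : inD G (n + d) (n + d - e).
  rewrite /inD leq_subr Gc_ge /=; last lia.
  by have -> : n + d - (n + d - e) = e by lia.
have lt_e_N : n + e < (n + d).+1 by lia.
have lt_co_N : n + d - e < (n + d).+1 by lia.
rewrite (cardD1E _ lt_e_N) /cardD1 (count_iota_predD1 _ lt_e_N).
rewrite [in X in _ < X](count_iota_predD1 _ (ltnSn (n + d))).
rewrite [in X in _ < X](count_iota_predD1 _ lt_co_N) De_self Dd_self.
have -> : [predD1 inD G (n + d) & n + d] (n + d - e) = true.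
  by rewrite /= -topredE /= Dd_co_e andbT; lia.
rewrite ltn_add2r -[nat_of_bool true]/1 addn1 ltnS.
apply: sub_count => s /= /andP[ne_s_ne De_s].
have lt_s_ne : s < n + e by rewrite ltn_neqAle ne_s_ne; case/and3P: De_s.
have le_sn : s <= n by rewrite -(leq_add2r e) inD_addn_multiplicity.
rewrite !inE -topredE /= (Arf_inD_lift Gd (ltnW lted) le_sn De_s) andbT.
apply/andP; split; lia.
Qed.

Lemma delta2_le_delta1 m : c <= m -> delta2 G m <= delta1 G (m + e).
Proof.
case: e_mult => Ge e_gt0 _ lecm.
have [q [le_me_q Gq ->]] := delta1_attained Gc (m + e).
have Gqe : G (q - (q - e)) by rewrite subKn //; apply: leq_trans le_me_q; apply: leq_addl.
rewrite -(cardD2_eq_cardD1 Gadd (leq_subr e q) Gqe).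
by apply: delta2_le; rewrite ?Gc //; lia.
Qed.

Lemma delta2_attained_gap m n1 n2 : c <= m -> m <= n1 -> n1 < n2 -> G (n2 - n1) ->
  cardD2 G n1 n2 = delta2 G m -> n2 - n1 = e /\ delta1 G (m + e) = delta2 G m.
Proof.
case: e_mult => Ge e_gt0 e_min lecm lemn1 lt12 Ggap.
rewrite (cardD2_eq_cardD1 Gadd (ltnW lt12) Ggap) => min_n2.
have gap_e : n2 - n1 = e.
  apply/eqP; rewrite eqn_leq e_min ?subn_gt0 // andbT leqNgt; apply/negP => lt_e_gap.
  have := Arf_cardD1_lt (leq_trans lecm lemn1) Ggap lt_e_gap.
  rewrite subnKC ?(ltnW lt12) // min_n2 -(cardD2_eq_cardD1 Gadd (leq_addr e n1)) ?addKn //.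
  by rewrite ltnNge delta2_le ?leq_addr ?Gc //; lia.
split=> //; apply/eqP; rewrite eqn_leq delta2_le_delta1 // andbT -min_n2.
by apply: delta1_le; rewrite ?Gc //; lia.
Qed.

End ArfSemigroup.

Section ShiftedSemigroup.

Variables (G : pred nat) (e' : nat).
Hypothesis e'_gt0 : 0 < e'.

Lemma shift_sg_ge c : (forall n, c <= n -> G n) -> forall n, c + e' <= n -> shift_sg G e' n.
Proof.
move=> Gc n le_n; apply/orP; right.
by apply/andP; split; [|apply: Gc]; lia.
Qed.

Lemma inD_shift_sg n s : G (n + e') ->
  inD (shift_sg G e') (n + e' + e') s =
  [|| s == 0, s == n + e' + e' | (e' <= s) && inD G n (s - e')].
Proof.
move=> Gne; rewrite /inD /shift_sg.
have [-> | s_gt0] := posnP s; first by rewrite /= subn0 addnK Gne leq_addl /= orbT.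
have [-> | ne_s] := eqVneq s (n + e' + e').
  by rewrite /= leqnn subnn addnK Gne leq_addl eqxx.
rewrite /=; have [le_es | //] := leqP e' s; rewrite /= ?andbF //.
have [le_sm | lt_ms] := leqP s (n + e' + e'); last first.
  by apply/esym/negbTE; rewrite negb_and -ltnNge; apply/orP; left; lia.
have -> : (n + e' + e' - s == 0) = false by apply/negbTE; lia.
have -> : (e' <= n + e' + e' - s) = (s - e' <= n) by apply/idP/idP; lia.
have -> : n + e' + e' - s - e' = n - (s - e') by lia.
by rewrite /= andbCA.
Qed.

Lemma cardD2_shift_sg n1 n2 : n1 < n2 -> G (n1 + e') -> G (n2 + e') ->
  cardD2 (shift_sg G e') (n1 + e' + e') (n2 + e' + e') + inD G n2 (n1 + e') =
  cardD2 G n1 n2 + 3.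
Proof.
move=> lt12 G1 G2; set m1 := n1 + e' + e'; set m2 := n2 + e' + e'.
have le_m12 : m1 <= m2 by rewrite /m1 /m2 !leq_add2r ltnW.
set Q := fun s => inD G n1 s || inD G n2 s.
set A := mem [:: 0; m1; m2]; set B := fun s => (e' <= s) && Q (s - e').
set l := iota 0 m2.+1.
have cardU : cardD2 (shift_sg G e') m1 m2 = count (predU A B) l.
  rewrite /cardD2 (maxn_idPr le_m12); apply: eq_count => s.
  rewrite /= !inD_shift_sg // -/m1 -/m2 !inE /B /Q andb_orr.
  by case: (s == 0); case: (s == m1); case: (s == m2); rewrite /= ?orbT ?orbA.
have cardA : count A l = 3.
  by apply: count_mem_iota => [|s]; rewrite /= !inE; lia.
have cardB : count B l = cardD2 G n1 n2.
  rewrite /l (_ : m2.+1 = e' + (n2 + e').+1); last lia.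
  rewrite count_iota_shift /cardD2 (maxn_idPr (ltnW lt12)).
  by apply: count_iota_trim => [|s /orP[] /and3P[le_s _ _]]; lia.
have cardI : count (predI A B) l = inD G n2 (n1 + e').
  have -> : count (predI A B) l = count (fun s => (s == m1) && inD G n2 (n1 + e')) l.
    apply: eq_count => s; rewrite /= !inE /B /Q.
    have [-> | _] := eqVneq s 0.
      by rewrite leqNgt e'_gt0 /= eq_sym gtn_eqF // ltn_addl.
    have [-> | _] := eqVneq s m1.
      by rewrite addnK inD_gt ?leq_addl //; lia.
    have [-> | _] := eqVneq s m2; last by [].
    by rewrite /= addnK !inD_gt ?andbF //; lia.
  case: (inD G n2 (n1 + e')).
    rewrite (@eq_count _ _ (pred1 m1)) => [|s]; last by rewrite andbT.
    by rewrite count_uniq_mem ?iota_uniq // mem_iota ltnS le_m12.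
  by rewrite (@eq_count _ _ pred0) ?count_pred0 // => s; rewrite andbF.
by rewrite cardU -cardI count_predUI cardA cardB addnC.
Qed.

End ShiftedSemigroup.

Section ArfShift.

Variables (G : pred nat) (c e e' : nat).
Hypotheses (G0 : G 0) (Gadd : forall x y, G x -> G y -> G (x + y)).
Hypotheses (G_Arf : Arf G) (Gc : forall n, c <= n -> G n).
Hypotheses (e_mult : is_multiplicity G e) (Ge' : G e') (e'_gt0 : 0 < e').

Definition shifted_delta2 m :=
  if (e' == e) && (delta1 G (m + e) == delta2 G m)
  then delta2 G m + 2 else delta2 G m + 3.

Lemma cardD2_shift_sg_ge m n1 n2 : c <= m -> m <= n1 -> n1 < n2 ->
  shifted_delta2 m <= cardD2 (shift_sg G e') (n1 + e' + e') (n2 + e' + e').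
Proof.
move=> lecm lemn1 lt12; rewrite /shifted_delta2.
have [G1 G2 G1e G2e] : [/\ G n1, G n2, G (n1 + e') & G (n2 + e')].
  by split; apply: Gc; lia.
have := cardD2_shift_sg e'_gt0 lt12 G1e G2e.
have := delta2_le lemn1 lt12 G1 G2.
case Dn2: (inD G n2 (n1 + e')); last by case: ifP; lia.
case: ifP => [_ | not_cond]; first lia.
suff : cardD2 G n1 n2 != delta2 G m by lia.
apply/eqP => min12; move/and3P: Dn2 => [le_n2 _ G_rest].
have Ggap : G (n2 - n1).
  by rewrite (_ : n2 - n1 = e' + (n2 - (n1 + e'))); [apply: Gadd | lia].
have [gap_e delta_eq] := delta2_attained_gap G0 Gadd G_Arf Gc e_mult lecm lemn1 lt12 Ggap min12.
case: e_mult => _ _ e_min.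
have e'_e : e' = e by apply/eqP; rewrite eqn_leq e_min // andbT -gap_e; lia.
by rewrite e'_e delta_eq !eqxx in not_cond.
Qed.

Lemma delta2_shift_sg_le m : c <= m ->
  delta2 (shift_sg G e') (m + e' + e') <= shifted_delta2 m.
Proof.
move=> lecm; have Gsc := shift_sg_ge e'_gt0 Gc.
rewrite /shifted_delta2; case: ifP => [/andP[/eqP <- /eqP <-] | _].
  have [q [le_q Gq ->]] := delta1_attained Gc (m + e').
  have lt_q : q - e' < q by lia.
  have G1 : G (q - e' + e') by apply: Gc; lia.
  have G2 : G (q + e') by apply: Gc; lia.
  have := cardD2_shift_sg e'_gt0 lt_q G1 G2.
  rewrite subnK ?inD_self //; last lia.
  rewrite (cardD2_eq_cardD1 Gadd (leq_subr e' q)) ?subKn //; last lia.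
  rewrite -[nat_of_bool true]/1 => shift_eq.
  have le_m : m + e' + e' <= q + e' by lia.
  have lt_m : q + e' < q + e' + e' by lia.
  apply: leq_trans (delta2_le le_m lt_m (Gsc _ _) (Gsc _ _)) _; lia.
have [p1 [p2 [le_p1 lt12 Gp1 Gp2 ->]]] := delta2_attained Gc m.
have G1 : G (p1 + e') by apply: Gc; lia.
have G2 : G (p2 + e') by apply: Gc; lia.
have <- := cardD2_shift_sg e'_gt0 lt12 G1 G2.
by rewrite (leq_trans _ (leq_addr _ _)) // delta2_le ?Gsc //; lia.
Qed.

Lemma delta2_shift_sg m : c <= m ->
  delta2 (shift_sg G e') (m + e' + e') = shifted_delta2 m.
Proof.
move=> lecm; apply/eqP; rewrite eqn_leq delta2_shift_sg_le //=.
have [m1 [m2 [le_m1 lt12 _ _ ->]]] := delta2_attained (shift_sg_ge e'_gt0 Gc) (m + e' + e').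
have -> : m1 = m1 - e' - e' + e' + e' by lia.
have -> : m2 = m2 - e' - e' + e' + e' by lia.
by apply: (cardD2_shift_sg_ge lecm); lia.
Qed.

End ArfShift.

Theorem theorem4p15 (G : pred nat) (c e e' : nat) :
  numerical_semigroup G -> Arf G ->
  is_conductor G c -> is_multiplicity G e ->
  G e' -> 0 < e' ->
  forall k : nat,
    delta2 (shift_sg G e') ((c + e') + e' + k) =
    if (e' == e) && (delta1 G (c + e + k) == delta2 G (c + k))
    then delta2 G (c + k) + 2
    else delta2 G (c + k) + 3.
Proof.
move=> [G0 Gadd _] G_Arf [Gc _] e_mult Ge' e'_gt0 k.
have -> : c + e' + e' + k = c + k + e' + e' by lia.
have -> : c + e + k = c + k + e by lia.
by apply: delta2_shift_sg (leq_addr k c).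
Qed.
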